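(* For every integer $\chi\geq 3$, $\vec{R}(\chi)\geq \vec{R}(\chi-1)+2$.
   Context: $TT_\ell$ denotes the transitive (acyclic) tournament on $\ell$ vertices, and $\vec{R}(\ell)$ is the least integer $N$ such that every tournament on at least $N$ vertices contains a copy of $TT_\ell$. *)

From mathcomp Require Import all_boot.
Set Implicit Arguments. Unset Strict Implicit. Unset Printing Implicit Defensive.

Definition is_tournament (T : finType) (beats : rel T) : Prop :=
  (forall x, ~~ beats x x) /\
  (forall x y, x != y -> (beats x y) (+) (beats y x)).

Definition contains_TT (T : finType) (beats : rel T) (l : nat) : Prop :=
  exists f : 'I_l -> T, injective f /\ (forall i j : 'I_l, i < j -> beats (f i) (f j)).

Definition forces_TT (l N : nat) : Prop :=
  forall (T : finType) (beats : rel T),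
    is_tournament beats -> N <= #|T| -> contains_TT beats l.

Definition is_dir_ramsey (l N : nat) : Prop :=
  forces_TT l N /\ (forall M, forces_TT l M -> N <= M).

(* Take a tournament T on R(chi-1) - 1 vertices without a transitive
   subtournament on chi - 1 vertices, and add two vertices x and y such that
   x beats every old vertex, every old vertex beats y, and y beats x.
   A transitive subtournament has no directed triangle, so it cannot contain
   both x and y together with a vertex of T; dropping the at most one new
   vertex it contains leaves a transitive subtournament of T.  The extended
   tournament thus has R(chi-1) + 1 vertices and no copy of TT_chi. *)
From mathcomp Require Import all_boot.

Set Implicit Arguments. Unset Strict Implicit. Unset Printing Implicit Defensive.

Lemma exists_neq2 (T : finType) (x y : T) :
  2 < #|T| -> exists z, (z != x) && (z != y).
Proof.
move=> card_gt2; have : 0 < #|~: [set x; y]|.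
  rewrite -(ltn_add2l #|[set x; y]|) addn0 cardsC cards2.
  by apply: leq_ltn_trans card_gt2; rewrite ltnS leq_b1.
by case/card_gt0P=> z; rewrite !inE negb_or; exists z.
Qed.

Lemma ltn_lift n (h : 'I_n) (i j : 'I_n.-1) : (lift h i < lift h j) = (i < j).
Proof. by rewrite !ltnNge /= leq_bump2. Qed.

Section TransitiveCopies.

Variables (T : finType) (beats : rel T).
Hypothesis beats_tournament : is_tournament beats.
Variables (l : nat) (f : 'I_l -> T).
Hypothesis f_ordered : forall i j : 'I_l, i < j -> beats (f i) (f j).

Lemma TT_beatsE i j : beats (f i) (f j) = (i < j).
Proof.
have [beats_irr beats_xor] := beats_tournament.
case: (ltngtP i j) => [/f_ordered -> // | ji | /val_inj ->]; last exact: negbTE.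
have fji := f_ordered ji; have /beats_xor : f j != f i.
  by apply: contraTneq fji => ->; apply: beats_irr.
by rewrite fji => /negbTE.
Qed.

Lemma TT_no_triangle i j k :
  beats (f i) (f j) -> beats (f j) (f k) -> beats (f k) (f i) -> False.
Proof. by rewrite !TT_beatsE => ij jk; rewrite ltnNge (ltnW (ltn_trans ij jk)). Qed.

End TransitiveCopies.

Lemma contains_TT_preimage (T U : finType) (beats : rel T) (beatsU : rel U)
    (h : T -> U) l (g : 'I_l -> U) :
    (forall a c, beatsU (h a) (h c) -> beats a c) ->
    injective g -> (forall i j : 'I_l, i < j -> beatsU (g i) (g j)) ->
    (forall i : 'I_l, exists a, h a == g i) ->
  contains_TT beats l.
Proof.
move=> h_beats g_inj g_ordered g_in_h.
have hfE i : h (xchoose (g_in_h i)) = g i by apply/eqP/(xchooseP (g_in_h i)).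
exists (fun i => xchoose (g_in_h i)); split.
  by move=> i j /(congr1 h); rewrite !hfE => /g_inj.
by move=> i j ij; apply: h_beats; rewrite !hfE; apply: g_ordered.
Qed.

Section TwoVertexExtension.

Variables (T : finType) (beats : rel T).

(* [None] is the new vertex x and [Some None] the new vertex y; the old
   vertices are the [Some (Some a)]. *)
Definition ext_beats : rel (option (option T)) :=
  fun u v => match u, v with
  | None, Some (Some _) => true
  | Some None, None => true
  | Some (Some _), Some None => true
  | Some (Some a), Some (Some c) => beats a c
  | _, _ => false
  end.

Definition old_vertex (u : option (option T)) : bool :=
  if u is Some (Some _) then true else false.

Lemma ext_tournament : is_tournament beats -> is_tournament ext_beats.
Proof.
move=> [beats_irr beats_xor]; split; first by case=> [[a|]|] //=; apply: beats_irr.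
case=> [[a|]|] [[c|]|] //= neq_ac; apply: beats_xor.
by apply: contraNneq neq_ac => ->.
Qed.

Lemma ext_new_triangle u v w :
    ~~ old_vertex u -> ~~ old_vertex v -> u != v -> old_vertex w ->
  [&& ext_beats u w, ext_beats w v & ext_beats v u] ||
  [&& ext_beats v w, ext_beats w u & ext_beats u v].
Proof. by case: u v w => [[?|]|] [[?|]|] [[?|]|]. Qed.

Lemma ext_new_vertex2 u v w :
    ~~ old_vertex u -> ~~ old_vertex v -> ~~ old_vertex w -> u != v ->
  (w == u) || (w == v).
Proof. by case: u v w => [[?|]|] [[?|]|] [[?|]|]. Qed.

Hypothesis beats_tournament : is_tournament beats.

Lemma ext_TT_new_vertex_uniq l (f : 'I_l.+3 -> option (option T)) :
    injective f -> (forall i j : 'I_l.+3, i < j -> ext_beats (f i) (f j)) ->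
  forall i j, ~~ old_vertex (f i) -> ~~ old_vertex (f j) -> i = j.
Proof.
move=> f_inj f_ordered i j new_i new_j; apply/eqP/negP => /negP neq_ij.
have [k /andP[neq_ki neq_kj]] : exists k, (k != i) && (k != j).
  by apply: exists_neq2; rewrite card_ord.
have neq_f : f i != f j by apply: contra neq_ij => /eqP/f_inj ->.
have old_k : old_vertex (f k).
  apply: contraT => new_k; have := ext_new_vertex2 new_i new_j new_k neq_f.
  by case/orP=> /eqP/f_inj eq_k; [move: neq_ki | move: neq_kj]; rewrite eq_k eqxx.
have no_triangle := TT_no_triangle (ext_tournament beats_tournament) f_ordered.
by case/orP: (ext_new_triangle new_i new_j neq_f old_k) => /and3P[]; apply: no_triangle.
Qed.

Lemma ext_contains_TT l : contains_TT ext_beats l.+3 -> contains_TT beats l.+2.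
Proof.
move=> [f [f_inj f_ordered]].
have [i0 old_lift] : exists i0, forall j, old_vertex (f (lift i0 j)).
  have [i0 new_i0 | all_old] := pickP (fun i => ~~ old_vertex (f i)).
    exists i0 => j; apply: contraT => new_j.
    by have := neq_lift i0 j; rewrite -(ext_TT_new_vertex_uniq f_inj f_ordered new_i0 new_j) eqxx.
  by exists ord0 => j; apply: negbFE; apply: all_old.
apply: (@contains_TT_preimage _ _ _ ext_beats (fun a => Some (Some a)) _ (f \o lift i0)).
- by [].
- exact: inj_comp f_inj (@lift_inj _ i0).
- by move=> i j ij; apply: f_ordered; rewrite ltn_lift.
- by move=> i; move: (old_lift i) => /=; case: (f _) => [[a|]|] //; exists a.
Qed.

End TwoVertexExtension.

Lemma forces_TT_ext l N : forces_TT l.+3 N.+2 -> forces_TT l.+2 N.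
Proof.
move=> forces T beats tour card_T; apply: (ext_contains_TT tour).
apply: forces (ext_tournament tour) _.
by rewrite !card_option !ltnS.
Qed.

Lemma forces_TT_leq l N M : N <= M -> forces_TT l N -> forces_TT l M.
Proof.
by move=> le_NM forces T beats tour card_T; apply: forces tour (leq_trans le_NM card_T).
Qed.

Lemma forces_TT_gt0 l N : forces_TT l.+1 N -> 0 < N.
Proof.
case: N => // /(_ void (fun _ _ => false)) forces.
have [|//|f _] := forces; first by split; case.
by case: (f ord0).
Qed.

Theorem proposition5p3 (chi : nat) (Hchi : 3 <= chi) (R1 R2 : nat) :
  is_dir_ramsey chi.-1 R1 -> is_dir_ramsey chi R2 -> R1 + 2 <= R2.
Proof.
case: chi Hchi => [|[|[|l]]] // _ [forces1 least1] [forces2 _].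
have R1_gt0 := forces_TT_gt0 forces1.
rewrite leqNgt addn2; apply/negP => R2_small.
have forces_R1S : forces_TT l.+3 R1.-1.+2 by apply: forces_TT_leq forces2; rewrite prednK.
have := least1 _ (forces_TT_ext forces_R1S).
by rewrite -ltnS prednK // ltnn.
Qed.
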